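(* Let $n\ge1$, $\alpha\in[0,\pi/2]$, and let $p(a,b|x,y)$, $a,x\in\{0,1\}$, $y\in\{0,\dots,n-1\}$, $b\in\{0,1,\varnothing\}$, admit an LHS model for Alice's trusted measurements $\mathrm A^\alpha_{a|x}$, i.e. $p(a,b|x,y)=\sum_\lambda \mathrm{tr}(\mathrm A^\alpha_{a|x}\rho_\lambda)\,p(b|y,\lambda)$ for a finite family of positive semidefinite $2\times2$ matrices $\rho_\lambda$ with $\sum_\lambda\mathrm{tr}\rho_\lambda=1$ and conditional probabilities $p(b|y,\lambda)$. Then $$n\sin\left(\tfrac{\pi}{2n}\right)\mathcal W^\alpha_n\ \le\ \sqrt2\,\sin\left(\tfrac{\pi}{2}\mathcal T_n\right)\gamma(s_\alpha).$$
   Context: $Z,X$ denote the Pauli matrices on $\mathbb C^2$. For $\alpha\in[0,\pi/2]$ and $x\in\{0,1\}$: $A^\alpha_x:=\cos\alpha\,\frac{Z+X}{\sqrt2}+(-1)^x\sin\alpha\,\frac{Z-X}{\sqrt2}$ and $\mathrm A^\alpha_{a|x}:=\frac12(I+(-1)^aA^\alpha_x)$. $s_\alpha:=2(\cos\alpha+\sin\alpha)$, $\gamma(s):=\frac{s+\sqrt{8-s^2}}{4}$. With $\theta_y=y\pi/n$: $\mathcal W^\alpha_n:=\frac1n\sum_{y=0}^{n-1}\sum_{a,b\in\{0,1\}}(-1)^{a+b}\big(\cos\theta_y\,p(a,b|0,y)+\sin\theta_y\,p(a,b|1,y)\big)$ and $\mathcal T_n:=\frac1n\sum_{y=0}^{n-1}\sum_{b\in\{0,1\}}p(b|y)$,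 where $p(b|y)=\sum_a p(a,b|x,y)$. *)

From HB Require Import structures.
From mathcomp Require Import all_boot all_order all_algebra.
From mathcomp Require Import complex.
From mathcomp Require Import reals trigo.
Set Implicit Arguments. Unset Strict Implicit. Unset Printing Implicit Defensive.
Import Order.TTheory GRing.Theory Num.Theory.
Local Open Scope ring_scope.
Local Open Scope complex_scope.

Section Defs.
Variable R : realType.
Local Notation C := R[i].

Definition pauliZ : 'M[C]_2 := \matrix_(i < 2, j < 2)
  (if i == j then (if i == 0 :> nat then 1 else -1) else 0).
Definition pauliX : 'M[C]_2 := \matrix_(i < 2, j < 2)
  (if i == j then 0 else 1).

Definition Aobs (alpha : R) (x : bool) : 'M[C]_2 :=
  ((cos alpha / Num.sqrt 2)%:C) *: (pauliZ + pauliX)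
  + (((-1) ^+ x * sin alpha / Num.sqrt 2)%:C) *: (pauliZ - pauliX).

Definition Aproj (alpha : R) (a x : bool) : 'M[C]_2 :=
  ((1 / 2 : R)%:C) *: (1%:M + ((-1) ^+ a : C) *: Aobs alpha x).

Definition adjmx m n (M : 'M[C]_(m, n)) : 'M[C]_(n, m) := (map_mx conjc M)^T.

Definition psd (M : 'M[C]_2) : Prop :=
  forall v : 'cV[C]_2, 0 <= (adjmx v *m M *m v) 0 0.

Definition s_alpha (alpha : R) : R := 2 * (cos alpha + sin alpha).
Definition gammaF (s : R) : R := (s + Num.sqrt (8 - s ^+ 2)) / 4.

(* the LHS-model (local hidden state) condition for Alice's trusted
   measurements; b = None stands for the outcome "varnothing" *)
Definition LHS_model (n : nat) (alpha : R)
    (p : bool -> option bool -> bool -> 'I_n -> R) : Prop :=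
  exists (k : nat) (rho : 'I_k -> 'M[C]_2) (pb : 'I_k -> 'I_n -> option bool -> R),
    [/\ (forall l, psd (rho l)),
        \sum_(l < k) \tr (rho l) = 1,
        (forall l y b, 0 <= pb l y b),
        (forall l y, \sum_(b : option bool) pb l y b = 1) &
        (forall a b x y,
           (p a b x y)%:C = \sum_(l < k) \tr (Aproj alpha a x *m rho l) * (pb l y b)%:C)].

Definition sgn (b : bool) : R := (-1) ^+ b.

Definition theta (n : nat) (y : 'I_n) : R := y%:R * pi / n%:R.

Definition Wn (n : nat) (p : bool -> option bool -> bool -> 'I_n -> R) : R :=
  n%:R^-1 * \sum_(y < n) \sum_(a : bool) \sum_(b : bool)
     sgn a * sgn b * (cos (theta y) * p a (Some b) false y
                      + sin (theta y) * p a (Some b) true y).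

(* p(b|y) = sum_a p(a,b|x,y), taken at x = 0 *)
Definition pB (n : nat) (p : bool -> option bool -> bool -> 'I_n -> R)
    (b : option bool) (y : 'I_n) : R := \sum_(a : bool) p a b false y.

Definition Tn (n : nat) (p : bool -> option bool -> bool -> 'I_n -> R) : R :=
  n%:R^-1 * \sum_(y < n) \sum_(b : bool) pB p (Some b) y.

End Defs.

From HB Require Import structures.
From mathcomp Require Import all_boot all_order all_algebra.
From mathcomp Require Import complex.
From mathcomp Require Import reals trigo.
From mathcomp Require Import topology normedtype derive.
From mathcomp Require Import lra ring.
Set Implicit Arguments. Unset Strict Implicit. Unset Printing Implicit Defensive.
Import numFieldNormedType.Exports.
Import Order.TTheory GRing.Theory Num.Theory.
Local Open Scope ring_scope.

(* Each hidden state rho_l contributes with weight w_l = tr rho_l and a Bloch vector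
   inside the ball of radius w_l.  Writing E_y for the difference of its outcome
   probabilities at setting y and q_y <= 1 for the probability that it answers at
   all, its share of n W is sum_y E_y (A cos theta_y + B sin theta_y), with
   sqrt (A^2 + B^2) <= sqrt 2 gamma(s_alpha) w_l because gamma(s_alpha) =
   max (cos alpha, sin alpha).  With h = pi/(2n) and m = sum_y q_y the points
   theta_y = 2 y h are equally spaced, and thresholding the weights at
   h cos (h m) reduces sin h * sum_y E_y sin (phi + 2 y h) <= sin (h m) to the case
   of a set of k points, where the k points nearest the peak are extremal and sum to
   sin (k h) / sin h.  Concavity of sin on [0, pi/2] then merges the hidden states,
   since pi/2 * T = sum_l w_l h m_l. *)

Section RealFacts.
Variable R : realType.
Implicit Types x y t h : R.

Definition pos_part x := Num.max x 0.

Lemma pos_part_ge0 x : 0 <= pos_part x.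
Proof. by rewrite /pos_part le_max lexx orbT. Qed.

Lemma ler_pos_part x : x <= pos_part x.
Proof. by rewrite /pos_part le_max lexx. Qed.

Lemma pos_part_id x : 0 <= x -> pos_part x = x.
Proof. by move=> x_ge0; rewrite /pos_part max_l. Qed.

Lemma pos_part_le0 x : x <= 0 -> pos_part x = 0.
Proof. by move=> x_le0; rewrite /pos_part max_r. Qed.

Lemma pos_part_normB x mu : 0 <= mu ->
  pos_part (`|x| - mu) = pos_part (x - mu) + pos_part (- x - mu).
Proof.
move=> mu_ge0; have [x_ge0|x_lt0] := lerP 0 x.
  by rewrite ger0_norm // (@pos_part_le0 (- x - mu)) ?addr0 //; lra.
by rewrite ltr0_norm // (@pos_part_le0 (x - mu)) ?add0r //; lra.
Qed.

Lemma big_nat_shift_periodic (G : nat -> R) N : (forall l, G (l + N)%N = G l) ->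
  forall j, \sum_(0 <= l < N) G l = \sum_(0 <= i < N) G (j + i)%N.
Proof.
move=> G_per; elim=> [|j IH]; first by apply: eq_bigr => i _; rewrite add0n.
have recl : \sum_(0 <= i < N.+1) G (j + i)%N = G j + \sum_(0 <= i < N) G (j.+1 + i)%N.
  by rewrite big_nat_recl // addn0; congr (_ + _); apply: eq_bigr => i _; rewrite addSnnS.
have recr : \sum_(0 <= i < N.+1) G (j + i)%N = \sum_(0 <= i < N) G (j + i)%N + G j.
  by rewrite big_nat_recr //= G_per.
by rewrite IH; apply: (addrI (G j)); rewrite -recl recr addrC.
Qed.

Lemma quad_form_ge0 (a b c : R) :
  (forall t1 t2 : R, 0 <= t1 ^+ 2 * a + t1 * t2 * b + t2 ^+ 2 * c) ->
  [/\ 0 <= a, 0 <= c & b ^+ 2 <= 4 * a * c].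
Proof.
move=> Q; have a_ge0 : 0 <= a by have := Q 1 0; rewrite !expr2; lra.
have c_ge0 : 0 <= c by have := Q 0 1; rewrite !expr2; lra.
split => //; have Qa := Q (- b) (2 * a); have Qc := Q (2 * c) (- b).
rewrite !expr2 in Qa Qc *.
have [a_gt0|a_le0] := ltrP 0 a.
  have : 0 <= a * (4 * a * c - b * b) by nra.
  by rewrite pmulr_rge0 // subr_ge0.
have [c_gt0|c_le0] := ltrP 0 c.
  have : 0 <= c * (4 * a * c - b * b) by nra.
  by rewrite pmulr_rge0 // subr_ge0.
have a0 : a = 0 by lra.
have c0 : c = 0 by lra.
have := Q 1 (- b); rewrite a0 c0 !expr2; nra.
Qed.

Lemma ler_cos x y : 0 <= x -> x <= y -> y <= pi -> cos y <= cos x.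
Proof.
move=> x_ge0 xy y_le; rewrite leNgt; apply/negP.
rewrite ltr_cos ?in_itv/= ?(le_trans x_ge0 xy) ?(le_trans xy y_le) ?x_ge0 ?y_le//.
by rewrite ltNge xy.
Qed.

Lemma cos_le_off_arc a x : 0 <= a <= pi -> a <= x <= pi *+ 2 - a -> cos x <= cos a.
Proof.
move=> /andP[a_ge0 a_le] /andP[ax xa]; have [x_le|x_gt] := lerP x pi.
  exact: ler_cos.
have -> : cos x = cos (pi *+ 2 - x) by rewrite addrC cosD2pi cosN.
by apply: ler_cos => //; rewrite mulr2n in xa *; lra.
Qed.

Lemma cos_ge_on_arc a x : `|x| <= a -> a <= pi -> cos a <= cos x.
Proof. by move=> xa a_le; rewrite -[cos x]cos_norm; apply: ler_cos xa a_le. Qed.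

Lemma sin_le_tangent x y : 0 <= x <= pi -> 0 <= y <= pi ->
  sin x <= sin y + cos y * (x - y).
Proof.
move=> /andP[x_ge0 x_le] /andP[y_ge0 y_le].
have mvt (a b : R) : a <= b -> exists2 c, c \in `[a, b] & sin b - sin a = cos c * (b - a).
  move=> ab; apply: (MVT_segment ab (fun z _ => is_derive_sin z)).
  by apply/continuous_subspaceT => ?; exact: continuous_sin.
have [xy|yx] := leP x y.
- have [c] := mvt _ _ xy; rewrite in_itv/= => /andP[xc cy] E.
  have : cos y <= cos c by apply: ler_cos => //; apply: le_trans xc.
  have : 0 <= y - x by lra.
  nra.
- have [c] := mvt _ _ (ltW yx); rewrite in_itv/= => /andP[yc cx] E.
  have : cos c <= cos y by apply: ler_cos => //; apply: le_trans cx _.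
  have : 0 <= x - y by lra.
  nra.
Qed.

Lemma sin_jensen (I : finType) (w x : I -> R) : (forall i, 0 <= w i) ->
  \sum_i w i = 1 -> (forall i, 0 <= x i <= pi / 2) ->
  \sum_i w i * sin (x i) <= sin (\sum_i w i * x i).
Proof.
move=> w_ge0 w_sum1 x_in; set M := \sum_i w i * x i.
have pi_gt0 := pi_gt0 R.
have M_ge0 : 0 <= M.
  by apply: sumr_ge0 => i _; case/andP: (x_in i) => *; rewrite mulr_ge0.
have M_le : M <= pi / 2.
  rewrite -[pi / 2]mul1r -{1}w_sum1 big_distrl /=; apply: ler_sum => i _.
  by case/andP: (x_in i) => _ xi; apply: ler_wpM2l.
apply: (le_trans (y := \sum_i w i * (sin M + cos M * (x i - M)))).
  apply: ler_sum => i _; apply: ler_wpM2l => //; apply: sin_le_tangent;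
    case/andP: (x_in i) => *; apply/andP; split; lra.
have E i : w i * (sin M + cos M * (x i - M)) = (sin M - cos M * M) * w i + cos M * (w i * x i).
  by ring.
by rewrite (eq_bigr _ (fun i _ => E i)) big_split /= -!big_distrr /= w_sum1 mulr1 subrK.
Qed.

Lemma polar_form (a b : R) : exists phi,
  a = Num.sqrt (a ^+ 2 + b ^+ 2) * sin phi /\ b = Num.sqrt (a ^+ 2 + b ^+ 2) * cos phi.
Proof.
set K := Num.sqrt (a ^+ 2 + b ^+ 2).
have K_ge0 : 0 <= K := sqrtr_ge0 _.
have KK : K ^+ 2 = a ^+ 2 + b ^+ 2 by rewrite sqr_sqrtr // addr_ge0 // sqr_ge0.
have [K0|K_neq0] := eqVneq K 0.
  exists 0; rewrite K0 !mul0r.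
  have : a ^+ 2 + b ^+ 2 = 0 by rewrite -KK K0 expr0n.
  by move=> ab0; split; nra.
have K_gt0 : 0 < K by rewrite lt_def K_neq0.
set c := b / K.
have bK : `|b| <= K.
  rewrite -(ler_pXn2r (n := 2)) ?nnegrE ?normr_ge0 // KK real_normK ?num_real //.
  by rewrite lerDr sqr_ge0.
have c_in : -1 <= c <= 1.
  by rewrite /c -ler_norml normrM normfV (ger0_norm K_ge0) ler_pdivrMr // mul1r.
have cK : K * c = b by rewrite /c mulrC divfK.
have sqrt_c : Num.sqrt (1 - c ^+ 2) = `|a| / K.
  have -> : 1 - c ^+ 2 = (`|a| / K) ^+ 2.
    rewrite /c !expr_div_n real_normK ?num_real // -[1](@divff _ (K ^+ 2)) ?expf_neq0 //.
    by rewrite -mulrBl KK addrK.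
  by rewrite sqrtr_sqr ger0_norm // divr_ge0.
exists (if 0 <= a then acos c else - acos c); split; last first.
  by case: ifP => _; rewrite ?cosN acosK ?cK // in_itv /=.
case: ifP => a_ge0.
  by rewrite sin_acos // sqrt_c ger0_norm // mulrC divfK.
by rewrite sinN sin_acos // sqrt_c ltr0_norm ?ltNge ?a_ge0 // mulrN mulrC divfK ?opprK.
Qed.

Lemma sin_mul_sum_cos_centered t h (k : nat) :
  sin h * \sum_(0 <= i < k) cos (t + (2 * i%:R + 1 - k%:R) * h) = cos t * sin (k%:R * h).
Proof.
pose F i := sin (t + (2 * i%:R - k%:R) * h) / 2.
have telescope i : sin h * cos (t + (2 * i%:R + 1 - k%:R) * h) = F i.+1 - F i.
  rewrite /F -[(i.+1)%:R]natr1.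
  have -> : t + (2 * (i%:R + 1) - k%:R) * h = (t + (2 * i%:R + 1 - k%:R) * h) + h by ring.
  have -> : t + (2 * i%:R - k%:R) * h = (t + (2 * i%:R + 1 - k%:R) * h) - h by ring.
  by rewrite sinD sinB; field.
rewrite big_distrr /= (eq_bigr _ (fun i _ => telescope i)) telescope_sumr // /F.
have -> : t + (2 * k%:R - k%:R) * h = t + k%:R * h by ring.
have -> : t + (2 * 0%:R - k%:R) * h = t - k%:R * h by ring.
by rewrite sinD sinB; field.
Qed.

Lemma exists_grid_point h z : 0 < h ->
  exists (j M : nat) (tau : R), -h < tau <= h /\ 2 * j%:R * h = z + tau + (pi *+ 2) *+ M.
Proof.
move=> h_gt0; have pi2_gt0 : 0 < pi *+ 2 :> R by rewrite pmulrn_lgt0 // pi_gt0.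
set M := (Num.truncn (`|z| / (pi *+ 2))).+1.
have zM : `|z| < (pi *+ 2) *+ M.
  have := truncnS_gt (`|z| / (pi *+ 2)); rewrite -/M ltr_pdivrMr //.
  by rewrite mulr_natl.
have z_ge : - `|z| <= z by rewrite lerNnormlW.
set z' := z + (pi *+ 2) *+ M.
have h2_gt0 : 0 < 2 * h by lra.
have z'h_ge0 : 0 <= z' + h by rewrite /z'; lra.
have /andP[jl ju] := truncn_itv (divr_ge0 z'h_ge0 (ltW h2_gt0)).
set j := Num.truncn _ in jl ju.
rewrite ler_pdivlMr // in jl; rewrite ltr_pdivrMr // -natr1 in ju.
exists j, M, (2 * j%:R * h - z'); split; last by rewrite /z'; ring.
by rewrite mulrDl mul1r in ju; apply/andP; split; nra.
Qed.

Lemma bathtub (I : finType) (q d : I -> R) (mu : R) : (forall i, 0 <= q i <= 1) ->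
  \sum_i q i * (d i - mu) <= \sum_(i | mu <= d i) (d i - mu).
Proof.
move=> q01; rewrite (bigID (fun i => mu <= d i)) /= -[X in _ <= X]addr0.
apply: lerD.
  apply: ler_sum => i d_ge; have /andP[q0 q1] := q01 i.
  by rewrite ler_piMl // subr_ge0.
apply: sumr_le0 => i; rewrite -ltNge => d_lt; have /andP[q0 q1] := q01 i.
by rewrite mulr_ge0_le0 // subr_le0 ltW.
Qed.

Lemma sqrt2_neq0 : Num.sqrt 2 != 0 :> R.
Proof. by rewrite sqrtr_eq0 -ltNge ltr0n. Qed.

Lemma sqrt_sum_sqr_le (c s g X Y w : R) : `|c| <= g -> `|s| <= g ->
  X ^+ 2 + Y ^+ 2 <= w ^+ 2 -> 0 <= w ->
  Num.sqrt ((c * (X + Y)) ^+ 2 + (s * (X - Y)) ^+ 2) <= Num.sqrt 2 * (g * w).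
Proof.
move=> cg sg XY w_ge0; have g_ge0 : 0 <= g := le_trans (normr_ge0 c) cg.
rewrite -[g * w]ger0_norm ?mulr_ge0 // -sqrtr_sqr -sqrtrM ?ler0n //.
rewrite ler_sqrt ?mulr_ge0 ?ler0n ?sqr_ge0 //.
have c2 : c ^+ 2 <= g ^+ 2 by rewrite -real_normK ?num_real // lerXn2r ?nnegrE.
have s2 : s ^+ 2 <= g ^+ 2 by rewrite -real_normK ?num_real // lerXn2r ?nnegrE.
have A := sqr_ge0 (X + Y); have B := sqr_ge0 (X - Y).
have E : (X + Y) ^+ 2 + (X - Y) ^+ 2 = 2 * (X ^+ 2 + Y ^+ 2) by ring.
rewrite !exprMn; nra.
Qed.

Lemma cos_sin_ge0 (a : R) : 0 <= a -> a <= pi / 2 -> 0 <= cos a /\ 0 <= sin a.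
Proof.
move=> a_ge0 a_le; have := pi_gt0 R => pi_gt0; split.
  by apply: cos_ge0_pihalf; apply/andP; split; lra.
by apply: sin_ge0_pi; apply/andP; split; lra.
Qed.

Lemma gammaF_s_alpha (a : R) : gammaF (s_alpha a) = Num.max (cos a) (sin a).
Proof.
rewrite /gammaF /s_alpha.
have -> : 8 - (2 * (cos a + sin a)) ^+ 2
    = (2 * (cos a - sin a)) ^+ 2 + 8 * (1 - (cos a ^+ 2 + sin a ^+ 2)) by ring.
rewrite cos2Dsin2 subrr mulr0 addr0 sqrtr_sqr.
have [sc|cs] := lerP (sin a) (cos a).
  by rewrite ger0_norm; [field|lra].
by rewrite ltr0_norm; [field|lra].
Qed.
End RealFacts.

Section EquallySpacedSines.
Variables (R : realType) (n : nat) (h : R).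
Hypotheses (n_gt0 : (0 < n)%N) (pi_eq : pi = 2 * n%:R * h).
Implicit Types phi mu tau A B : R.

Local Lemma n_ge1 : 1 <= (n%:R : R). Proof. by rewrite ler1n. Qed.

Local Lemma h_gt0 : 0 < h.
Proof. by have := pi_gt0 R; rewrite pi_eq pmulr_rgt0 // mulr_gt0 // ltr0n. Qed.

Local Lemma sin_h_gt0 : 0 < sin h.
Proof. by have n1 := n_ge1; have h0 := h_gt0; apply: sin_gt0_pi; rewrite h0 /= pi_eq; nra. Qed.

Lemma sum_abs_sin_le_pos_part phi mu (P : {set 'I_n}) : 0 <= mu ->
  \sum_(y in P) `|sin (phi + 2 * y%:R * h)|
    <= \sum_(0 <= l < n.*2) pos_part (sin (phi + 2 * l%:R * h) - mu) + #|P|%:R * mu.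
Proof.
move=> mu_ge0; pose G l := pos_part (sin (phi + 2 * l%:R * h) - mu).
have -> : \sum_(y in P) `|sin (phi + 2 * y%:R * h)|
    = \sum_(y in P) (`|sin (phi + 2 * y%:R * h)| - mu) + #|P|%:R * mu.
  by rewrite sumrB sumr_const mulr_natl subrK.
rewrite lerD2r.
apply: (le_trans (y := \sum_(y : 'I_n) pos_part (`|sin (phi + 2 * y%:R * h)| - mu))).
  rewrite [X in _ <= X](bigID (mem P)) /= -[X in X <= _]addr0.
  apply: lerD; first by apply: ler_sum => y _; exact: ler_pos_part.
  by apply: sumr_ge0 => y _; exact: pos_part_ge0.
have antipodal (y : nat) : pos_part (`|sin (phi + 2 * y%:R * h)| - mu) = G y + G (y + n)%N.
  rewrite pos_part_normB // /G natrD.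
  have -> : phi + 2 * (y%:R + n%:R) * h = (phi + 2 * y%:R * h) + pi by rewrite pi_eq; ring.
  by rewrite sinDpi.
rewrite (eq_bigr _ (fun (y : 'I_n) _ => antipodal y)) -(big_mkord xpredT (fun l => G l + G (l + n)%N)).
rewrite big_split /= (@big_cat_nat _ _ _ n 0 n.*2) //=; last by rewrite -addnn leq_addr.
suff -> : \sum_(n <= i < n.*2) G i = \sum_(0 <= i < n) G (i + n)%N by [].
by rewrite -{1}[n]add0n big_addn -addnn addnK.
Qed.

Lemma sum_pos_part_cos_centered tau (k : nat) : -h < tau <= h -> (k <= n)%N ->
  \sum_(0 <= i < n.*2) pos_part (cos (tau + (2 * i%:R + 1 - k%:R) * h) - cos (k%:R * h))
    = \sum_(0 <= i < k) cos (tau + (2 * i%:R + 1 - k%:R) * h) - k%:R * cos (k%:R * h).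
Proof.
move=> /andP[tau_gt tau_le] kn; have h0 := h_gt0; have k_ge0 : 0 <= k%:R :> R := ler0n _ _.
have kR : k%:R <= n%:R :> R by rewrite ler_nat.
rewrite (@big_cat_nat _ _ _ k 0 n.*2) //=; last by rewrite -addnn (leq_trans kn) ?leq_addr.
rewrite [X in _ + X]big1_seq ?addr0; last first.
  move=> i /andP[_]; rewrite mem_index_iota => /andP[ki i_lt].
  apply: pos_part_le0; rewrite subr_le0; apply: cos_le_off_arc.
    by apply/andP; split; rewrite ?pi_eq; nra.
  have kiR : k%:R <= i%:R :> R by rewrite ler_nat.
  have iR : i%:R + 1 <= 2 * n%:R :> R.
    by move: i_lt; rewrite -(ler_nat R) -addn1 natrD -muln2 natrM mulrC.
  by apply/andP; split; rewrite ?pi_eq ?mulr2n; nra.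
have -> : k%:R * cos (k%:R * h) = \sum_(0 <= i < k) cos (k%:R * h).
  by rewrite sumr_const_nat subn0 mulr_natl.
rewrite -sumrB; apply: eq_big_nat => i /andP[_ ik].
apply: pos_part_id; rewrite subr_ge0; apply: cos_ge_on_arc; last by rewrite pi_eq; nra.
have ikR : i%:R + 1 <= k%:R :> R by move: ik; rewrite -(ler_nat R) -addn1 natrD.
have i_ge0 : 0 <= i%:R :> R := ler0n _ _.
by rewrite ler_norml; apply/andP; split; nra.
Qed.

Lemma sum_abs_sin_subset phi (P : {set 'I_n}) :
  sin h * \sum_(y in P) `|sin (phi + 2 * y%:R * h)| <= sin (#|P|%:R * h).
Proof.
(* Among the 2n points of the full circle, after rotating the grid so that it is
   centred on the maximum of sin, exactly the k points nearest it exceed the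
   threshold cos (k h). *)
set k := #|P|; have h0 := h_gt0; have n1 := n_ge1; have k_ge0 : 0 <= k%:R :> R := ler0n _ _.
have kn : (k <= n)%N by rewrite -[n in (_ <= n)%N]card_ord max_card.
have kR : k%:R <= n%:R :> R by rewrite ler_nat.
have mu_ge0 : 0 <= cos (k%:R * h).
  by apply: cos_ge0_pihalf; apply/andP; split; rewrite ?pi_eq; nra.
have sin_kh_ge0 : 0 <= sin (k%:R * h).
  by apply: sin_ge0_pi; apply/andP; split; rewrite ?pi_eq; nra.
have [j [M [tau [tau_in jE]]]] := exists_grid_point (pi / 2 + (1 - k%:R) * h - phi) h_gt0.
have rotate i : sin (phi + 2 * (j + i)%N%:R * h) = cos (tau + (2 * i%:R + 1 - k%:R) * h).
  have -> : phi + 2 * (j + i)%N%:R * h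
      = (tau + (2 * i%:R + 1 - k%:R) * h + pi / 2) + (pi *+ 2) *+ M.
    by rewrite natrD mulrDr mulrDl jE; ring.
  by rewrite (periodicn (@sinD2pi R)) sinDpihalf.
have := sum_abs_sin_le_pos_part phi P mu_ge0.
rewrite (big_nat_shift_periodic _ j) => [|l]; last first.
  rewrite -muln2 natrD natrM; have -> : phi + 2 * (l%:R + n%:R * 2%:R) * h
    = (phi + 2 * l%:R * h) + pi *+ 2 by rewrite pi_eq mulr2n; ring.
  by rewrite sinD2pi.
rewrite (eq_bigr _ (fun i _ => congr1 (fun s => pos_part (s - _)) (rotate i))).
rewrite sum_pos_part_cos_centered // subrK => S.
rewrite -/k; apply: (le_trans (ler_wpM2l (ltW sin_h_gt0) S)).
rewrite sin_mul_sum_cos_centered ler_piMl //; exact: cos_le1.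
Qed.

Lemma sum_weighted_sin_le phi (q E : 'I_n -> R) :
  (forall y, 0 <= q y <= 1) -> (forall y, `|E y| <= q y) ->
  sin h * \sum_y E y * sin (phi + 2 * y%:R * h) <= sin (h * \sum_y q y).
Proof.
move=> q01 Eq; have h0 := h_gt0; have n1 := n_ge1; have sh0 := sin_h_gt0; set m := \sum_y q y.
have m_ge0 : 0 <= m by apply: sumr_ge0 => y _; case/andP: (q01 y).
have m_le : m <= n%:R.
  rewrite /m -[n in n%:R]card_ord -sumr_const.
  by apply: ler_sum => y _; case/andP: (q01 y).
set mu := h * cos (h * m).
pose d (y : 'I_n) := sin h * `|sin (phi + 2 * y%:R * h)|.
pose P := [set y | mu <= d y].
have kR : #|P|%:R <= n%:R :> R by rewrite ler_nat -[n in (_ <= n)%N]card_ord max_card.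
have k_ge0 : 0 <= #|P|%:R :> R := ler0n _ _.
have weighted : sin h * \sum_y E y * sin (phi + 2 * y%:R * h) <= \sum_y q y * d y.
  rewrite big_distrr /=; apply: ler_sum => y _.
  rewrite /d [in X in _ <= X]mulrCA ler_pM2l //.
  apply: le_trans (ler_norm _) _; rewrite normrM.
  by apply: ler_wpM2r.
have subset : \sum_(y in P) (d y - mu) <= sin (#|P|%:R * h) - #|P|%:R * mu.
  rewrite sumrB sumr_const -[mu *+ _]mulr_natl lerD2r /d -big_distrr /=.
  exact: sum_abs_sin_subset.
have bath : \sum_y q y * (d y - mu) <= \sum_(y in P) (d y - mu).
  apply: (le_trans (bathtub d mu q01)); rewrite le_eqVlt; apply/orP; left.
  by apply/eqP/eq_bigl => y; rewrite inE.
have tangent : sin (#|P|%:R * h) <= sin (h * m) + cos (h * m) * (#|P|%:R * h - h * m).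
  by apply: sin_le_tangent; apply/andP; split; rewrite ?pi_eq; nra.
have split_mu : \sum_y q y * d y = \sum_y q y * (d y - mu) + mu * m.
  by rewrite /m big_distrr /= -big_split /=; apply: eq_bigr => y _; ring.
have slope : cos (h * m) * (#|P|%:R * h - h * m) = #|P|%:R * mu - mu * m by rewrite /mu; ring.
apply: (le_trans weighted); rewrite split_mu; lra.
Qed.

Lemma sum_weighted_harmonic_le A B (q E : 'I_n -> R) :
  (forall y, 0 <= q y <= 1) -> (forall y, `|E y| <= q y) ->
  sin h * \sum_y E y * (A * cos (2 * y%:R * h) + B * sin (2 * y%:R * h))
    <= Num.sqrt (A ^+ 2 + B ^+ 2) * sin (h * \sum_y q y).
Proof.
move=> q01 Eq; have [phi [AE BE]] := polar_form A B.
set K := Num.sqrt _ in AE BE *.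
have K_ge0 : 0 <= K := sqrtr_ge0 _.
have shift y : E y * (A * cos (2 * y%:R * h) + B * sin (2 * y%:R * h))
    = K * (E y * sin (phi + 2 * y%:R * h)) by rewrite AE BE sinD; ring.
rewrite (eq_bigr _ (fun y _ => shift y)) -big_distrr /= mulrCA.
by apply: ler_wpM2l => //; exact: sum_weighted_sin_le.
Qed.

End EquallySpacedSines.

Section QubitObservables.
Variable R : realType.
Local Open Scope complex_scope.
Local Notation C := R[i].
Local Notation re := (@complex.Re R).
Implicit Types M : 'M[C]_2.

Lemma re_sum (I : finType) (F : I -> C) : re (\sum_i F i) = \sum_i re (F i).
Proof. exact: (raddf_sum (re : Rcomplex R -> R)). Qed.

Lemma re_mulRl (r : R) (z : C) : re (r%:C * z) = r * re z.
Proof. by case: z => a b /=; rewrite mul0r subr0. Qed.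

Lemma sum_ord2 (V : nmodType) (F : 'I_2 -> V) : \sum_(i < 2) F i = F 0 + F 1.
Proof. by rewrite big_ord_recl big_ord1; congr (_ + F _); apply: val_inj. Qed.

Definition bloch_z M := re (M 0 0) - re (M 1 1).
Definition bloch_x M := re (M 0 1) + re (M 1 0).

Lemma re_trace M : re (\tr M) = re (M 0 0) + re (M 1 1).
Proof. by rewrite re_sum sum_ord2. Qed.

Definition Aproj_coef (al : R) (a x : bool) (i j : 'I_2) : R :=
  let zij := if i == j then (if i == 0 :> nat then 1 else -1) else 0 in
  let xij := if i == j then 0 else 1 in
  ((i == j)%:R + (-1) ^+ a * (cos al / Num.sqrt 2 * (zij + xij)
                              + (-1) ^+ x * sin al / Num.sqrt 2 * (zij - xij))) / 2.

Lemma Aproj_coefE al a x i j : Aproj al a x i j = (Aproj_coef al a x i j)%:C.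
Proof.
rewrite /Aproj /Aobs /Aproj_coef /pauliZ /pauliX !mxE.
rewrite !(rmorphM, rmorphD, rmorphB, rmorphN, rmorph1, rmorphXn, rmorph_nat, fmorphV).
by case: (i == j); case: (i == 0 :> nat); ring.
Qed.

Lemma re_trace_Aproj al a x M :
  re (\tr (Aproj al a x *m M)) = (re (\tr M) + (-1) ^+ a *
    (cos al / Num.sqrt 2 * (bloch_z M + bloch_x M)
     + (-1) ^+ x * sin al / Num.sqrt 2 * (bloch_z M - bloch_x M))) / 2.
Proof.
rewrite re_trace /mxtrace re_sum sum_ord2 !mxE !sum_ord2 !raddfD /= !Aproj_coefE !re_mulRl.
by rewrite /Aproj_coef /bloch_z /bloch_x /=; ring.
Qed.

Lemma psd_quad_form M : psd M -> forall t1 t2 : R,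
  0 <= t1 ^+ 2 * re (M 0 0) + t1 * t2 * bloch_x M + t2 ^+ 2 * re (M 1 1).
Proof.
move=> M_psd t1 t2; pose v : 'cV[C]_2 := \col_i (if i == 0 then t1 else t2)%:C.
have := M_psd v; rewrite lecE => /andP[_].
rewrite /adjmx !mxE !sum_ord2 !mxE !sum_ord2 !mxE /=.
rewrite !oppr0 !complexr0 !raddfD /= ![_ * _%:C]mulrC !re_mulRl !raddfD /= !re_mulRl.
by rewrite /bloch_x !expr2 => ?; nra.
Qed.

Lemma psd_bloch_ball M : psd M ->
  0 <= re (\tr M) /\ bloch_z M ^+ 2 + bloch_x M ^+ 2 <= re (\tr M) ^+ 2.
Proof.
move=> /psd_quad_form Q; have [r0_ge0 r1_ge0 disc] := quad_form_ge0 Q.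
rewrite re_trace /bloch_z; split; first exact: addr_ge0.
have E : (re (M 0 0) + re (M 1 1)) ^+ 2 = (re (M 0 0) - re (M 1 1)) ^+ 2 + 4 * re (M 0 0) * re (M 1 1)
  by ring.
by rewrite E lerD2l.
Qed.

End QubitObservables.

Section LocalHiddenStateModel.
Variables (R : realType) (n : nat) (alpha : R).
Variable p : bool -> option bool -> bool -> 'I_n -> R.
Variables (k : nat) (rho : 'I_k -> 'M[R[i]]_2) (pb : 'I_k -> 'I_n -> option bool -> R).
Hypotheses (n_gt0 : (0 < n)%N) (alpha_ge0 : 0 <= alpha) (alpha_le : alpha <= pi / 2).
Hypotheses (rho_psd : forall l, psd (rho l)) (tr_rho : \sum_(l < k) \tr (rho l) = 1).
Hypotheses (pb_ge0 : forall l y b, 0 <= pb l y b)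
  (pb_sum1 : forall l y, \sum_(b : option bool) pb l y b = 1).
Hypothesis p_model : forall a b x y,
  ((p a b x y)%:C = \sum_(l < k) \tr (Aproj alpha a x *m rho l) * (pb l y b)%:C)%C.

Local Notation re := (@complex.Re R).
(* [w l] is the weight of the hidden state [l]; [U l] and [V l] are the components
   of its Bloch vector along (Z+X)/sqrt2 and (Z-X)/sqrt2, scaled by cos alpha and
   sin alpha; [click l y] is the probability of a conclusive outcome b in {0,1}. *)
Local Notation w l := (re (\tr (rho l))).
Local Notation U l := (cos alpha / Num.sqrt 2 * (bloch_z (rho l) + bloch_x (rho l))).
Local Notation V l := (sin alpha / Num.sqrt 2 * (bloch_z (rho l) - bloch_x (rho l))).
Local Notation click l y := (pb l y (Some true) + pb l y (Some false)).
Local Notation corr l y := (pb l y (Some false) - pb l y (Some true)).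

Lemma p_hidden a b x y :
  p a b x y = \sum_l (w l + (-1) ^+ a * (U l + (-1) ^+ x * V l)) / 2 * pb l y b.
Proof.
have := congr1 re (p_model a b x y); rewrite /= re_sum => ->.
by apply: eq_bigr => l _; rewrite mulrC re_mulRl re_trace_Aproj; ring.
Qed.

Lemma Wn_hidden : n%:R * Wn p =
  \sum_l \sum_y corr l y * ((U l + V l) * cos (@theta R n y) + (U l - V l) * sin (@theta R n y)).
Proof.
rewrite /Wn mulrA mulfV ?pnatr_eq0 -?lt0n // mul1r [RHS]exchange_big /=.
apply: eq_bigr => y _; rewrite !big_bool /sgn !p_hidden.
rewrite !big_distrr /= -!big_split /= !big_distrr /= -!big_split /=.
apply: eq_bigr => l _.
by rewrite !expr1 !expr0; field; exact: sqrt2_neq0.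
Qed.

Lemma Tn_hidden : n%:R * Tn p = \sum_l w l * \sum_y click l y.
Proof.
rewrite /Tn /pB mulrA mulfV ?pnatr_eq0 -?lt0n // mul1r.
under eq_bigr do rewrite big_bool !big_bool !p_hidden -!big_split /=.
rewrite exchange_big /=; apply: eq_bigr => l _; rewrite big_distrr /=.
by apply: eq_bigr => y _; rewrite !expr1 !expr0; field; exact: sqrt2_neq0.
Qed.

Lemma click_bounds l y : 0 <= click l y <= 1.
Proof.
have := pb_sum1 l y; rewrite (bigD1 None) // (bigD1 (Some true)) // (bigD1 (Some false)) //=.
rewrite big1 => [|[[]|] //]; rewrite ?andbF //.
have := pb_ge0 l y None; have := pb_ge0 l y (Some true); have := pb_ge0 l y (Some false).
by move=> *; apply/andP; split; lra.
Qed.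

Lemma corr_le_click l y : `|corr l y| <= click l y.
Proof.
have := pb_ge0 l y (Some true); have := pb_ge0 l y (Some false).
by rewrite ler_norml => *; apply/andP; split; lra.
Qed.

Lemma weight_ge0 l : 0 <= w l.
Proof. by case: (psd_bloch_ball (rho_psd l)). Qed.

Lemma sum_weight : \sum_l w l = 1.
Proof. by rewrite -re_sum tr_rho. Qed.

Lemma amplitude_le l : Num.sqrt ((U l + V l) ^+ 2 + (U l - V l) ^+ 2)
  <= Num.sqrt 2 * (gammaF (s_alpha alpha) * w l).
Proof.
have [w_ge0 ball] := psd_bloch_ball (rho_psd l).
have [cos_ge0 sin_ge0] := cos_sin_ge0 alpha_ge0 alpha_le.
have sqrt2 : Num.sqrt 2 ^+ 2 = 2 :> R by rewrite sqr_sqrtr // ler0n.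
have -> : (U l + V l) ^+ 2 + (U l - V l) ^+ 2
    = (cos alpha * (bloch_z (rho l) + bloch_x (rho l))) ^+ 2
      + (sin alpha * (bloch_z (rho l) - bloch_x (rho l))) ^+ 2.
  have -> : (U l + V l) ^+ 2 + (U l - V l) ^+ 2 = 2 * ((U l) ^+ 2 + (V l) ^+ 2) by ring.
  by rewrite !exprMn !exprVn sqrt2; field.
apply: sqrt_sum_sqr_le => //; rewrite gammaF_s_alpha.
  by rewrite ger0_norm // le_max lexx.
by rewrite ger0_norm // le_max lexx orbT.
Qed.

Lemma click_sum_bounds l : 0 <= \sum_y click l y <= n%:R.
Proof.
apply/andP; split; first by apply: sumr_ge0 => y _; case/andP: (click_bounds l y).
rewrite -[n in n%:R]card_ord -sumr_const.
by apply: ler_sum => y _; case/andP: (click_bounds l y).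
Qed.

Lemma hidden_state_bound h l : pi = 2 * n%:R * h ->
  sin h * \sum_y corr l y * ((U l + V l) * cos (@theta R n y) + (U l - V l) * sin (@theta R n y))
    <= Num.sqrt 2 * gammaF (s_alpha alpha) * (w l * sin (h * \sum_y click l y)).
Proof.
move=> pi_eq; have pi_gt0 := pi_gt0 R.
have theta_E y : @theta R n y = 2 * y%:R * h.
  by rewrite /theta pi_eq; field; rewrite pnatr_eq0 -lt0n.
under eq_bigr do rewrite !theta_E.
apply: le_trans (sum_weighted_harmonic_le n_gt0 pi_eq _ _ (click_bounds l) (corr_le_click l)) _.
have -> : Num.sqrt 2 * gammaF (s_alpha alpha) * (w l * sin (h * \sum_y click l y))
    = Num.sqrt 2 * (gammaF (s_alpha alpha) * w l) * sin (h * \sum_y click l y) by ring.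
apply: ler_wpM2r; last exact: amplitude_le.
have h_gt0 : 0 < h by move: pi_gt0; rewrite pi_eq pmulr_rgt0 // mulr_gt0 // ltr0n.
have /andP[m_ge0 m_le] := click_sum_bounds l.
by apply: sin_ge0_pi; apply/andP; split; rewrite ?pi_eq; nra.
Qed.

Lemma LHS_model_bound : n%:R * sin (pi / (2 * n%:R)) * Wn p
  <= Num.sqrt 2 * sin (pi / 2 * Tn p) * gammaF (s_alpha alpha).
Proof.
set h := pi / (2 * n%:R).
have pi_eq : pi = 2 * n%:R * h by rewrite /h; field; rewrite pnatr_eq0 -lt0n.
have h_gt0 : 0 < h by rewrite divr_gt0 ?pi_gt0 // mulr_gt0 // ltr0n.
have dose_in l : 0 <= h * \sum_y click l y <= pi / 2.
  by have /andP[? ?] := click_sum_bounds l; apply/andP; split; rewrite ?pi_eq; nra.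
have -> : pi / 2 * Tn p = \sum_l w l * (h * \sum_y click l y).
  have -> : pi / 2 * Tn p = h * (n%:R * Tn p) by rewrite pi_eq; field.
  by rewrite Tn_hidden big_distrr /=; apply: eq_bigr => l _; ring.
rewrite mulrAC Wn_hidden mulrC big_distrr /=.
apply: le_trans (ler_sum _ (fun l _ => hidden_state_bound l pi_eq)) _.
rewrite -big_distrr /= mulrAC; apply: ler_wpM2r.
  have [cos_ge0 _] := cos_sin_ge0 alpha_ge0 alpha_le.
  by rewrite gammaF_s_alpha le_max cos_ge0.
by apply: ler_wpM2l; [exact: sqrtr_ge0 | exact: sin_jensen weight_ge0 sum_weight dose_in].
Qed.

End LocalHiddenStateModel.

Unset Implicit Arguments.

Theorem mainTheorem6 (R : realType) (n : nat) (alpha : R)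
    (p : bool -> option bool -> bool -> 'I_n -> R) :
  (1 <= n)%N -> 0 <= alpha -> alpha <= pi / 2 ->
  LHS_model alpha p ->
  n%:R * sin (pi / (2 * n%:R)) * Wn p
    <= Num.sqrt 2 * sin (pi / 2 * Tn p) * gammaF (s_alpha alpha).
Proof.
move=> n_gt0 alpha_ge0 alpha_le [k [rho [pb [rho_psd tr_rho pb_ge0 pb_sum1 p_model]]]].
exact: LHS_model_bound p_model.
Qed.
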